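(* Fix $\Lambda_0,\dots,\Lambda_{N-1}\ge0$ with a unique minimizer $j_\star$ ($\Lambda_j>\Lambda_{j_\star}$ for $j\ne j_\star$), fix $\boldsymbol\Gamma^{(1)}$ irreducible, and for $\theta>0$ let $-\mu(\theta)$ be the largest eigenvalue of $\theta\boldsymbol\Theta^{(1)}-\boldsymbol\Psi$ and $-\lambda(\theta)$ the largest eigenvalue of $\theta\boldsymbol\Gamma^{(1)}-\mathrm{diag}(\Lambda_j)$. Then as $\theta\to0$, $$\mu(\theta)=2\Lambda_{j_\star}+2\theta\sum_{j\neq j_\star}\Gamma^{(1)}_{jj_\star}-4\theta^2\sum_{j\neq j_\star}\frac{(\Gamma^{(1)}_{jj_\star})^2}{\Lambda_j-\Lambda_{j_\star}}+O(\theta^3),$$ the corresponding unit eigenvector is $\mathbf W^{(0)}+\theta\mathbf W^{(1)}+O(\theta^2)$ with $W^{(0)}_{jl}=\delta_{jj_\star}\delta_{lj_\star}$, $W^{(1)}_{j_\star l}=2\Gamma^{(1)}_{j_\star l}/(\Lambda_l-\Lambda_{j_\star})$ for $l>j_\star$, $W^{(1)}_{jj_\star}=2\Gamma^{(1)}_{jj_\star}/(\Lambda_j-\Lambda_{j_\star})$ for $j<j_\star$, and $W^{(1)}_{jl}=0$ otherwise; and $$\mu(\theta)-2\lambda(\theta)=-2\theta^2\sum_{j\neq j_\star}\frac{(\Gamma^{(1)}_{jj_\star})^2}{\Lambda_j-\Lambda_{j_\star}}+O(\theta^3),$$ which is negative for $\theta$ small enough.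
   Context: Let $N\ge 2$. Let $\boldsymbol\Gamma^{(1)}=(\Gamma^{(1)}_{jl})_{j,l=0}^{N-1}$ be a real symmetric matrix with $\Gamma^{(1)}_{jl}\ge 0$ for $j\neq l$ and $\Gamma^{(1)}_{jj}=-\sum_{l\neq j}\Gamma^{(1)}_{jl}$; it is called irreducible if the graph on $\{0,\dots,N-1\}$ with an edge between $j\neq l$ whenever $\Gamma^{(1)}_{jl}>0$ is connected. Let $\mathcal T_N=\{(j,l)\in\mathbb N^2:0\le j\le l\le N-1\}$; for $\mathbf S\in\mathbb R^{\mathcal T_N}$, $S_{jl}$ with $j>l$ means $S_{lj}$. Define $(\boldsymbol\Psi\mathbf S)_{jl}=(\Lambda_j+\Lambda_l)S_{jl}$ and $(\boldsymbol\Theta^{(1)}\mathbf S)_{jl}=2\Gamma^{(1)}_{jl}\mathbf 1_{j\neq l}(S_{jj}+S_{ll}-2S_{jl})+\sum_{n\notin\{j,l\}}[\Gamma^{(1)}_{ln}(S_{jn}-S_{jl})+\Gamma^{(1)}_{jn}(S_{nl}-S_{jl})]$. *)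

From Stdlib Require Import Reals Lra Arith Bool.
Open Scope R_scope.

Fixpoint sumN (n : nat) (f : nat -> R) : R :=
  match n with
  | O => 0
  | S m => sumN m f + f m
  end.

(* Vectors in R^{T_N} are represented as S : nat -> nat -> R, of which only the
   entries S j l with j <= l < N matter; symm S j l reads S_{jl} with the
   convention S_{jl} = S_{lj} for j > l. *)
Definition symm (S : nat -> nat -> R) (j l : nat) : R :=
  if Nat.leb j l then S j l else S l j.

Definition sumT (N : nat) (f : nat -> nat -> R) : R :=
  sumN N (fun j => sumN N (fun l => if Nat.leb j l then f j l else 0)).

Definition normT (N : nat) (S : nat -> nat -> R) : R :=
  sqrt (sumT N (fun j l => (S j l) ^ 2)).

Definition gamma_ok (N : nat) (G : nat -> nat -> R) : Prop :=
  (forall j l, (j < N)%nat -> (l < N)%nat -> G j l = G l j) /\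
  (forall j l, (j < N)%nat -> (l < N)%nat -> j <> l -> 0 <= G j l) /\
  (forall j, (j < N)%nat ->
     G j j = - sumN N (fun l => if Nat.eqb l j then 0 else G j l)).

Inductive reach (N : nat) (G : nat -> nat -> R) (j : nat) : nat -> Prop :=
  | reach_refl : reach N G j j
  | reach_step : forall m l, reach N G j m -> (m < N)%nat -> (l < N)%nat ->
      m <> l -> 0 < G m l -> reach N G j l.

Definition irreducible (N : nat) (G : nat -> nat -> R) : Prop :=
  forall j l, (j < N)%nat -> (l < N)%nat -> reach N G j l.

Definition PsiOp (Lam : nat -> R) (S : nat -> nat -> R) (j l : nat) : R :=
  (Lam j + Lam l) * symm S j l.

Definition ThetaOp (N : nat) (G : nat -> nat -> R) (S : nat -> nat -> R)
  (j l : nat) : R :=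
  2 * G j l * (if Nat.eqb j l then 0 else 1)
    * (symm S j j + symm S l l - 2 * symm S j l)
  + sumN N (fun n =>
      if orb (Nat.eqb n j) (Nat.eqb n l) then 0
      else G l n * (symm S j n - symm S j l) + G j n * (symm S n l - symm S j l)).

Definition opT (N : nat) (G : nat -> nat -> R) (Lam : nat -> R) (theta : R)
  (S : nat -> nat -> R) (j l : nat) : R :=
  theta * ThetaOp N G S j l - PsiOp Lam S j l.

Definition is_eigvecT (N : nat) (A : (nat -> nat -> R) -> nat -> nat -> R)
  (nu : R) (S : nat -> nat -> R) : Prop :=
  (exists j l, (j <= l)%nat /\ (l < N)%nat /\ S j l <> 0) /\
  (forall j l, (j <= l)%nat -> (l < N)%nat -> A S j l = nu * S j l).

Definition is_eigT N A nu : Prop := exists S, is_eigvecT N A nu S.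

Definition is_eigN (N : nat) (G : nat -> nat -> R) (Lam : nat -> R) (theta nu : R)
  : Prop :=
  exists v : nat -> R,
    (exists j, (j < N)%nat /\ v j <> 0) /\
    (forall j, (j < N)%nat ->
       theta * sumN N (fun l => G j l * v l) - Lam j * v j = nu * v j).

Definition is_largest (P : R -> Prop) (nu : R) : Prop :=
  P nu /\ forall nu', P nu' -> nu' <= nu.

Definition W0 (js : nat) (j l : nat) : R :=
  if andb (Nat.eqb j js) (Nat.eqb l js) then 1 else 0.

Definition W1 (G : nat -> nat -> R) (Lam : nat -> R) (js : nat) (j l : nat) : R :=
  if andb (Nat.eqb j js) (Nat.ltb js l) then 2 * G js l / (Lam l - Lam js)
  else if andb (Nat.eqb l js) (Nat.ltb j js) then 2 * G j js / (Lam j - Lam js)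
  else 0.

Definition sumG (N : nat) (G : nat -> nat -> R) (js : nat) : R :=
  sumN N (fun j => if Nat.eqb j js then 0 else G j js).

Definition sumH (N : nat) (G : nat -> nat -> R) (Lam : nat -> R) (js : nat) : R :=
  sumN N (fun j => if Nat.eqb j js then 0 else (G j js) ^ 2 / (Lam j - Lam js)).

From Stdlib Require Import Reals Lra Lia Classical.
From mathcomp Require all_boot all_order all_algebra Rstruct polyrcf ring lra.
Open Scope R_scope.

(** Both operators have the form [theta * L - diag(d)], where [d] has a unique minimum
    at an index [star], with gap [g], and [L] is linear and bounded in the sup norm.
    Section [Perturbation] treats this situation in general:
    - a maximal-entry argument shows that an eigenvalue above [-d star - g/2] lies
      within [theta * B] of [-d star] and that its eigenvectors are dominated by
      their [star] entry;
    - normalizing that entry to [1], the eigen equation yields order by order the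
      eigenvector [unit_star + theta * correction + O(theta^2)] and the eigenvalue
      [-d star + theta (L unit_star)_star + theta^2 (L correction)_star + O(theta^3)];
    - such an eigenvalue exists, hence is the largest one: in finite coordinates
      [det(diag(nu + d) - t E)] is polynomial in [t] and in [nu], no eigenvalue
      crosses the ends of the window [-d star -+ g/2] while [t] grows from [0] to
      [theta], and the intermediate value theorem applies (module [Continuation]).
    The theorem follows by instantiating this twice -- on [T_N], coded into
    [{0, ..., N*N - 1}], with [L = Theta^(1)], [d = Lambda_j + Lambda_l],
    [star = (js, js)], and on [{0, ..., N-1}] with [L = Gamma^(1)], [d = Lambda],
    [star = js] -- and computing the coefficients; irreducibility of [Gamma^(1)]
    makes the [theta^2] coefficient of [mu - 2 lambda] negative. *)

Definition coord_eigen (K : nat) (d : nat -> R) (E : nat -> nat -> R)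
  (t nu : R) (v : nat -> R) : Prop :=
  forall k, (k < K)%nat -> t * sumN K (fun k' => E k k' * v k') - d k * v k = nu * v k.

Definition coord_nonzero (K : nat) (v : nat -> R) : Prop :=
  exists k, (k < K)%nat /\ v k <> 0.

(** Existence of an eigenvalue in a window, by continuation in the coupling [t]. *)
Module Continuation.
Import all_boot all_order all_algebra Rstruct polyrcf ring lra.
Import GRing.Theory Num.Theory Order.TTheory.

Section Determinants.
Local Open Scope ring_scope.
Variables (K : nat) (d : nat -> R) (E : nat -> nat -> R).

Lemma sumN_big (f : nat -> R) : sumN K f = \sum_(i < K) f i.
Proof. by elim: K => [|n IH]; rewrite ?big_ord0 // big_ord_recr /= IH. Qed.

Definition shift_mx (t nu : R) : 'M[R]_K :=
  \matrix_(i, j) ((i == j)%:R * (nu + d i) - t * E i j).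

Lemma kernel_of_det0 t nu : \det (shift_mx t nu) = 0 ->
  exists v, coord_nonzero K v /\ coord_eigen K d E t nu v.
Proof.
rewrite -det_tr => /eqP/det0P [w wn0 hw].
pose v k := if (insub k : option 'I_K) is Some i then w 0 i else 0.
have vE (i : 'I_K) : v i = w 0 i by rewrite /v valK.
exists v; split.
  apply: NNPP => hn; apply/negP: wn0; apply/negPn/eqP/rowP => i.
  rewrite mxE -vE; apply: NNPP => hi; apply: hn; exists i; split => //.
  exact/ssrnat.ltP.
move=> k /ssrnat.ltP hk; pose i := Ordinal hk.
have /= := congr1 (fun M : 'M[R]_(1, K) => M 0 i) hw; rewrite !mxE => hrow.
have hsum : \sum_(j < K) w 0 j * (shift_mx t nu)^T j i =
    w 0 i * (nu + d i) - t * \sum_(j < K) E i j * w 0 j.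
  under eq_bigr => j _ do rewrite !mxE mulrBr.
  rewrite sumrB mulr_sumr (bigD1 i) //= eqxx mul1r big1 ?addr0; last first.
    by move=> j /negbTE; rewrite eq_sym => ->; rewrite mul0r mulr0.
  by congr (_ - _); apply: eq_bigr => j _; ring.
rewrite sumN_big (eq_bigr (fun j : 'I_K => E i j * w 0 j)); last by move=> j _; rewrite vE.
rewrite -(vE i) in hsum; rewrite hrow in hsum.
change (t * \sum_(j < K) E i j * w 0 j - d i * v i = nu * v i).
lra.
Qed.

Definition det_in_t (nu : R) : {poly R} :=
  \det (\matrix_(i < K, j < K) (((i == j)%:R * (nu + d i))%:P - 'X * (E i j)%:P)).

Lemma det_in_tE nu t : (det_in_t nu).[t] = \det (shift_mx t nu).
Proof.
rewrite /det_in_t -horner_evalE -det_map_mx; congr (\det _); apply/matrixP => i j.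
by rewrite !mxE /= horner_evalE !hornerE.
Qed.

Definition det_in_nu (t : R) : {poly R} :=
  \det (\matrix_(i < K, j < K) ((i == j)%:R *: ('X + (d i)%:P) - (t * E i j)%:P)).

Lemma det_in_nuE t nu : (det_in_nu t).[nu] = \det (shift_mx t nu).
Proof.
rewrite /det_in_nu -horner_evalE -det_map_mx; congr (\det _); apply/matrixP => i j.
by rewrite !mxE /= horner_evalE !hornerE.
Qed.

Lemma det_shift_mx0 nu : \det (shift_mx 0 nu) = \prod_(i < K) (nu + d i).
Proof.
have -> : shift_mx 0 nu = diag_mx (\row_i (nu + d i)).
  apply/matrixP => i j; rewrite !mxE mul0r subr0.
  by case: eqP => [->|_]; rewrite ?mul1r ?mulr1n ?mul0r ?mulr0n.
by rewrite det_diag; apply: eq_bigr => i _; rewrite mxE.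
Qed.

Lemma det_sign_persists nu th : 0 <= th ->
  (forall t, 0 <= t <= th -> \det (shift_mx t nu) != 0) ->
  0 < \det (shift_mx 0 nu) * \det (shift_mx th nu).
Proof.
move=> hth hnz; rewrite ltNge; apply/negP => hle.
rewrite -!det_in_tE in hle; have [t ht /rootP rt] := polyrcf.poly_ivt hth hle.
move: ht; rewrite in_itv /= => /(hnz t).
by rewrite -det_in_tE rt eqxx.
Qed.

Lemma det_root_between th lo hi : lo <= hi ->
  \det (shift_mx th lo) * \det (shift_mx th hi) <= 0 ->
  exists2 nu, lo <= nu <= hi & \det (shift_mx th nu) = 0.
Proof.
move=> hlohi; rewrite -!det_in_nuE => /(polyrcf.poly_ivt hlohi) [nu hnu /rootP rnu].
by exists nu; [move: hnu; rewrite in_itv | rewrite -det_in_nuE].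
Qed.

Lemma det_shift_mx0_sign lo hi k0 : (k0 < K)%N -> lo + d k0 < 0 < hi + d k0 ->
  (forall k, (k < K)%N -> k != k0 -> 0 < lo + d k) -> lo <= hi ->
  \det (shift_mx 0 lo) * \det (shift_mx 0 hi) < 0.
Proof.
move=> hk0 /andP [hlo hhi] hoth hlohi; rewrite !det_shift_mx0.
have plo : \prod_(i < K) (lo + d i) < 0.
  rewrite (bigD1 (Ordinal hk0)) //= pmulr_llt0 //.
  by apply: prodr_gt0 => i; rewrite -val_eqE /= => ne; apply: hoth.
have phi : 0 < \prod_(i < K) (hi + d i).
  apply: prodr_gt0 => i _; have [e|ne] := eqVneq (i : nat) k0; first by rewrite e.
  by apply: (lt_le_trans (hoth _ (ltn_ord i) ne)); rewrite lerD2r.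
by rewrite pmulr_llt0.
Qed.

End Determinants.

Lemma eigenvalue_continuation (K : nat) (d : nat -> R) (E : nat -> nat -> R)
  (lo hi th : R) (k0 : nat) :
  lo <= hi -> 0 <= th ->
  (forall t nu v, 0 <= t <= th -> (nu = lo \/ nu = hi) ->
     coord_eigen K d E t nu v -> forall k, (k < K)%coq_nat -> v k = 0) ->
  (k0 < K)%coq_nat -> lo + d k0 < 0 < hi + d k0 ->
  (forall k, (k < K)%coq_nat -> k <> k0 -> 0 < lo + d k) ->
  exists nu, lo <= nu <= hi /\
    exists v, coord_nonzero K v /\ coord_eigen K d E th nu v.
Proof.
move=> /RleP hlohi /RleP hth Hker /ssrnat.ltP hk0 [/RltP hlo /RltP hhi] hoth.
have nonvanish t nu : (0 <= t <= th)%R -> nu = lo \/ nu = hi -> (\det (shift_mx K d E t nu) != 0)%R.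
  move=> /andP [/RleP h0 /RleP h1] hnu; apply/eqP => /kernel_of_det0 [v [[k [hk hv]] hev]].
  by apply: hv; apply: (Hker t nu v _ hnu hev).
have persist nu : nu = lo \/ nu = hi -> (0 < \det (shift_mx K d E 0 nu) * \det (shift_mx K d E th nu))%R.
  by move=> hnu; apply: det_sign_persists => // t ht; apply: nonvanish.
have sign0 : (\det (shift_mx K d E 0 lo) * \det (shift_mx K d E 0 hi) < 0)%R.
  apply: (@det_shift_mx0_sign K d E lo hi k0 hk0) => //; first by rewrite hlo hhi.
  by move=> k /ssrnat.ltP hk /eqP ne; apply/RltP; apply: hoth.
have signth : (\det (shift_mx K d E th lo) * \det (shift_mx K d E th hi) <= 0)%R.
  have := persist lo (or_introl erefl); have := persist hi (or_intror erefl).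
  move: sign0; nra.
have [nu /andP [/RleP h1 /RleP h2] /kernel_of_det0 hv] := @det_root_between K d E th lo hi hlohi signth.
by exists nu; split.
Qed.

End Continuation.

Lemma abs_le_inv x a : Rabs x <= a -> - a <= x <= a.
Proof. unfold Rabs; destruct (Rcase_abs x); intros; lra. Qed.

Lemma sumN_ext n f h : (forall k, (k < n)%nat -> f k = h k) -> sumN n f = sumN n h.
Proof.
  induction n as [|n IH]; intros H; simpl; [reflexivity|].
  rewrite IH, (H n); [reflexivity|lia|intros k Hk; apply H; lia].
Qed.

Lemma sumN_plus n f h : sumN n (fun k => f k + h k) = sumN n f + sumN n h.
Proof. induction n as [|n IH]; simpl; [lra|rewrite IH; lra]. Qed.

Lemma sumN_scal n c f : sumN n (fun k => c * f k) = c * sumN n f.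
Proof. induction n as [|n IH]; simpl; [lra|rewrite IH; lra]. Qed.

Lemma sumN_le n f h : (forall k, (k < n)%nat -> f k <= h k) -> sumN n f <= sumN n h.
Proof.
  induction n as [|n IH]; intros H; simpl; [lra|].
  assert (h1 := IH (fun k hk => H k ltac:(lia))). assert (h2 := H n ltac:(lia)). lra.
Qed.

Lemma sumN_const n c : sumN n (fun _ => c) = INR n * c.
Proof. induction n as [|n IH]; cbn [sumN]; [simpl; ring|rewrite IH, S_INR; ring]. Qed.

Lemma sumN_zero n f : (forall k, (k < n)%nat -> f k = 0) -> sumN n f = 0.
Proof. intros H. rewrite (sumN_ext n f (fun _ => 0)), sumN_const by auto. ring. Qed.

Lemma sumN_nonneg n f : (forall k, (k < n)%nat -> 0 <= f k) -> 0 <= sumN n f.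
Proof. intros H. rewrite <- (sumN_zero n (fun _ => 0)) by auto. now apply sumN_le. Qed.

Lemma sumN_abs_le n f c : (forall k, (k < n)%nat -> Rabs (f k) <= c) ->
  Rabs (sumN n f) <= INR n * c.
Proof.
  induction n as [|n IH]; intros H; cbn [sumN].
  - rewrite Rabs_R0; simpl; lra.
  - rewrite S_INR. eapply Rle_trans; [apply Rabs_triang|].
    assert (h1 := IH (fun k hk => H k ltac:(lia))). assert (h2 := H n ltac:(lia)). lra.
Qed.

Lemma sumN_delta n p f : (p < n)%nat ->
  sumN n (fun k => if Nat.eqb k p then f k else 0) = f p.
Proof.
  induction n as [|n IH]; intros Hp; simpl; [lia|].
  destruct (Nat.eq_dec p n) as [->|ne].
  - rewrite Nat.eqb_refl, sumN_zero; [lra|].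
    intros k Hk. destruct (Nat.eqb_spec k n); [lia|auto].
  - rewrite IH by lia. destruct (Nat.eqb_spec n p); [lia|lra].
Qed.

Lemma sumN_split n f p : (p < n)%nat ->
  sumN n f = f p + sumN n (fun k => if Nat.eqb k p then 0 else f k).
Proof.
  intros Hp. rewrite <- (sumN_delta n p f Hp), <- sumN_plus. apply sumN_ext.
  intros k _. destruct (Nat.eqb k p); lra.
Qed.

Lemma sumN_ge_term n f p : (forall k, (k < n)%nat -> 0 <= f k) -> (p < n)%nat ->
  f p <= sumN n f.
Proof.
  intros H Hp. rewrite (sumN_split n f p Hp).
  assert (0 <= sumN n (fun k => if Nat.eqb k p then 0 else f k)); [|lra].
  apply sumN_nonneg. intros k Hk. destruct (Nat.eqb k p); [lra|auto].
Qed.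

Lemma dominant_index n f : (0 < n)%nat ->
  exists k, (k < n)%nat /\ forall k', (k' < n)%nat -> Rabs (f k') <= Rabs (f k).
Proof.
  induction n as [|n IH]; intros Hn; [lia|].
  destruct (Nat.eq_dec n 0) as [->|Hn0].
  - exists 0%nat. split; [lia|]. intros k' Hk'. replace k' with 0%nat by lia. lra.
  - destruct (IH ltac:(lia)) as [k [Hk Hmax]].
    destruct (Rle_dec (Rabs (f n)) (Rabs (f k))) as [hle|hgt].
    + exists k. split; [lia|]. intros k' Hk'.
      destruct (Nat.eq_dec k' n) as [->|ne]; [auto|apply Hmax; lia].
    + exists n. split; [lia|]. intros k' Hk'.
      destruct (Nat.eq_dec k' n) as [->|ne]; [lra|].
      assert (h := Hmax k' ltac:(lia)). lra.
Qed.

(** * Eigenvalue perturbation of [theta * L - diag(d)] around a simple minimum of [d]. *)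

Section Perturbation.

Variable I : Type.
Variable eq_dec : forall i j : I, {i = j} + {i <> j}.
Variable dom : I -> Prop.
Variable L : (I -> R) -> I -> R.
Variable d : I -> R.
Variable star : I.
Variables g B : R.

Hypothesis Hstar : dom star.
Hypothesis Hg : 0 < g.
Hypothesis HB : 0 < B.
Hypothesis Hgap : forall i, dom i -> i <> star -> d star + g <= d i.
Hypothesis Hext : forall x y, (forall i, dom i -> x i = y i) ->
  forall i, dom i -> L x i = L y i.
Hypothesis Hlin : forall x y c i, dom i ->
  L (fun k => x k + c * y k) i = L x i + c * L y i.
Hypothesis Hbound : forall x m, (forall i, dom i -> Rabs (x i) <= m) ->
  forall i, dom i -> Rabs (L x i) <= B * m.
(* [dom] is finite in the sense that sup norms are attained *)
Hypothesis Hdominant : forall x : I -> R,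
  exists i, dom i /\ forall i', dom i' -> Rabs (x i') <= Rabs (x i).

Definition eigen (theta nu : R) (x : I -> R) : Prop :=
  forall i, dom i -> theta * L x i - d i * x i = nu * x i.

Definition nonzero_on (x : I -> R) : Prop := exists i, dom i /\ x i <> 0.

Definition is_eig (theta nu : R) : Prop := exists x, nonzero_on x /\ eigen theta nu x.

Definition unit_star (i : I) : R := if eq_dec i star then 1 else 0.

Definition correction (i : I) : R :=
  if eq_dec i star then 0 else L unit_star i / (d i - d star).

Definition a1 : R := 2 * B / g.
Definition a2 : R := a1 * (a1 + B / g).
Definition a3 : R := B * a2.

Lemma a1_nonneg : 0 <= a1.
Proof. unfold a1. apply Rle_mult_inv_pos; lra. Qed.

Lemma a2_nonneg : 0 <= a2.
Proof.
  unfold a2. assert (h := a1_nonneg). assert (0 <= B / g) by (apply Rle_mult_inv_pos; lra).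
  apply Rmult_le_pos; lra.
Qed.

Lemma d_ge_star i : dom i -> d star <= d i.
Proof.
  intros Hi. destruct (eq_dec i star) as [->|ne]; [lra|]. assert (h := Hgap i Hi ne). lra.
Qed.

Lemma L_scale x c i : dom i -> L (fun k => c * x k) i = c * L x i.
Proof.
  intros Hi.
  assert (H0 : L (fun _ => 0) i = 0).
  { assert (h := Hbound (fun _ => 0) 0 ltac:(intros; cbv beta; rewrite Rabs_R0; lra) i Hi).
    rewrite Rmult_0_r in h. apply NNPP. intros hn. assert (h2 := Rabs_pos_lt _ hn). lra. }
  rewrite (Hext _ (fun k => 0 + c * x k)) by (auto; intros; ring).
  rewrite Hlin, H0 by auto. ring.
Qed.

Lemma eigen_scale theta nu x c : eigen theta nu x -> eigen theta nu (fun k => c * x k).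
Proof.
  intros H i Hi. rewrite L_scale by auto.
  replace (theta * (c * L x i) - d i * (c * x i)) with (c * (theta * L x i - d i * x i))
    by ring.
  rewrite (H i Hi). ring.
Qed.

Lemma dominant_entry_bound theta nu x i : 0 <= theta -> eigen theta nu x -> dom i ->
  (forall i', dom i' -> Rabs (x i') <= Rabs (x i)) ->
  Rabs (nu + d i) * Rabs (x i) <= theta * B * Rabs (x i).
Proof.
  intros Ht H Hi Hmax. rewrite <- Rabs_mult.
  replace ((nu + d i) * x i) with (theta * L x i) by (rewrite Rmult_plus_distr_r, <- (H i Hi); ring).
  rewrite Rabs_mult, (Rabs_right theta), Rmult_assoc by lra.
  apply Rmult_le_compat_l; [lra|]. apply Hbound; auto.
Qed.

Lemma eigen_vanishes theta nu x : 0 <= theta -> theta * B <= g / 4 ->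
  (forall i, dom i -> g / 2 <= Rabs (nu + d i)) -> eigen theta nu x ->
  forall i, dom i -> x i = 0.
Proof.
  intros Ht HtB Hfar H i Hi. apply NNPP. intros Hne.
  destruct (Hdominant x) as [j [Hj Hmax]].
  assert (hc := dominant_entry_bound theta nu x j Ht H Hj Hmax).
  assert (hp : 0 < Rabs (x j)).
  { eapply Rlt_le_trans; [apply Rabs_pos_lt; exact Hne|apply Hmax; auto]. }
  assert (h2 := Hfar j Hj). nra.
Qed.

Lemma eigen_localized theta nu x : 0 <= theta -> theta * B <= g / 4 ->
  - d star - g / 2 <= nu -> nonzero_on x -> eigen theta nu x ->
  Rabs (nu + d star) <= theta * B /\ x star <> 0 /\
  forall i, dom i -> Rabs (x i) <= Rabs (x star).
Proof.
  intros Ht HtB Hnu [i0 [Hi0 Hne]] H.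
  destruct (Hdominant x) as [j [Hj Hmax]].
  assert (hc := dominant_entry_bound theta nu x j Ht H Hj Hmax).
  assert (hp : 0 < Rabs (x j)).
  { eapply Rlt_le_trans; [apply Rabs_pos_lt; exact Hne|apply Hmax; auto]. }
  assert (hle : Rabs (nu + d j) <= theta * B) by (apply Rmult_le_reg_r with (Rabs (x j)); lra).
  destruct (eq_dec j star) as [->|ne].
  - split; [auto|split; [|auto]]. intros Hz. rewrite Hz, Rabs_R0 in hp. lra.
  - exfalso. assert (h := Hgap j Hj ne). assert (h2 := Rle_abs (nu + d j)). lra.
Qed.

Lemma eigen_normalize theta nu x : eigen theta nu x -> x star <> 0 ->
  (forall i, dom i -> Rabs (x i) <= Rabs (x star)) ->
  let y := fun i => / x star * x i in
  eigen theta nu y /\ y star = 1 /\ forall i, dom i -> Rabs (y i) <= 1.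
Proof.
  intros H Hnz Hmax y. split; [|split].
  - apply eigen_scale, H.
  - unfold y. field. auto.
  - intros i Hi. unfold y. rewrite Rabs_mult, Rabs_inv.
    assert (hp : 0 < Rabs (x star)) by (apply Rabs_pos_lt; auto).
    apply Rmult_le_reg_l with (Rabs (x star)); [auto|].
    rewrite <- Rmult_assoc, Rinv_r, Rmult_1_l, Rmult_1_r by lra. apply Hmax; auto.
Qed.

Lemma correction_bound i : dom i -> Rabs (correction i) <= B / g.
Proof.
  intros Hi. unfold correction. destruct (eq_dec i star) as [e|ne].
  - rewrite Rabs_R0. apply Rle_mult_inv_pos; lra.
  - assert (hD := Hgap i Hi ne).
    assert (hL : Rabs (L unit_star i) <= B).
    { rewrite <- (Rmult_1_r B). apply Hbound; auto. intros k _. unfold unit_star.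
      destruct (eq_dec k star); [rewrite Rabs_R1|rewrite Rabs_R0]; lra. }
    unfold Rdiv. rewrite Rabs_mult, Rabs_inv, (Rabs_right (d i - d star)) by lra.
    apply Rmult_le_compat; [apply Rabs_pos|left; apply Rinv_0_lt_compat; lra|auto|].
    apply Rinv_le_contravar; lra.
Qed.

Section Normalized.

Variables (theta nu : R) (x : I -> R).
Hypothesis Ht : 0 < theta.
Hypothesis HtB : theta * B <= g / 4.
Hypothesis Heig : eigen theta nu x.
Hypothesis Hone : x star = 1.
Hypothesis Hle1 : forall i, dom i -> Rabs (x i) <= 1.
Hypothesis Hnu : Rabs (nu + d star) <= theta * B.

(* off [star], the eigen equation divides by [nu + d i >= g/2] *)
Lemma shifted_gap i : dom i -> i <> star -> g / 2 <= nu + d i.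
Proof.
  intros Hi ne. assert (h := Hgap i Hi ne). assert (h2 := abs_le_inv _ _ Hnu). lra.
Qed.

Lemma first_order i : dom i -> i <> star -> Rabs (x i) <= a1 * theta.
Proof.
  intros Hi ne. assert (hpos := shifted_gap i Hi ne).
  assert (hL : Rabs (L x i) <= B) by (rewrite <- (Rmult_1_r B); apply Hbound; auto).
  assert (he : (nu + d i) * x i = theta * L x i) by (rewrite Rmult_plus_distr_r, <- (Heig i Hi); ring).
  assert (hx : (g / 2) * Rabs (x i) <= theta * B).
  { apply Rle_trans with (Rabs (nu + d i) * Rabs (x i)).
    - apply Rmult_le_compat_r; [apply Rabs_pos|]. rewrite Rabs_right; lra.
    - rewrite <- Rabs_mult, he, Rabs_mult, (Rabs_right theta) by lra.
      apply Rmult_le_compat_l; lra. }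
  unfold a1. apply Rmult_le_reg_l with (g / 2); [lra|].
  replace (g / 2 * (2 * B / g * theta)) with (theta * B) by (field; lra). auto.
Qed.

Lemma first_order_residual i : dom i -> Rabs (x i - unit_star i) <= a1 * theta.
Proof.
  intros Hi. unfold unit_star. destruct (eq_dec i star) as [->|ne].
  - rewrite Hone, Rminus_diag, Rabs_R0. assert (h := a1_nonneg). nra.
  - rewrite Rminus_0_r. apply first_order; auto.
Qed.

Lemma second_order i : dom i -> i <> star ->
  Rabs (x i - theta * correction i) <= a2 * theta ^ 2.
Proof.
  intros Hi ne. assert (hpos := shifted_gap i Hi ne). assert (hD := Hgap i Hi ne).
  assert (hR : Rabs (L (fun k => x k - unit_star k) i) <= B * (a1 * theta))
    by (apply Hbound; auto; apply first_order_residual).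
  assert (hsplit : L x i = L unit_star i + L (fun k => x k - unit_star k) i).
  { rewrite <- (Rmult_1_l (L (fun k => x k - unit_star k) i)), <- Hlin by auto.
    apply Hext; auto. intros; ring. }
  assert (hW := correction_bound i Hi).
  unfold correction in *. destruct (eq_dec i star) as [e|_]; [contradiction|].
  set (D := d i - d star) in *. set (dl := nu + d star) in *.
  set (w := L unit_star i / D) in *.
  set (r := L (fun k => x k - unit_star k) i) in *.
  assert (key : (nu + d i) * (x i - theta * w) = theta * r - dl * theta * w).
  { rewrite Rmult_minus_distr_l.
    replace ((nu + d i) * x i) with (theta * L x i) by (rewrite Rmult_plus_distr_r, <- (Heig i Hi); ring).
    rewrite hsplit. unfold w, D, dl. field. unfold D in hD. lra. }
  assert (hb : Rabs (theta * r - dl * theta * w) <= theta ^ 2 * (B * (a1 + B / g))).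
  { unfold Rminus. eapply Rle_trans; [apply Rabs_triang|].
    rewrite Rabs_Ropp, !Rabs_mult, (Rabs_right theta) by lra.
    assert (h1 : theta * Rabs r <= theta * (B * (a1 * theta))) by (apply Rmult_le_compat_l; lra).
    assert (h2 : Rabs dl * theta * Rabs w <= theta * B * theta * (B / g)).
    { apply Rmult_le_compat; [|apply Rabs_pos|apply Rmult_le_compat_r; lra|auto].
      apply Rmult_le_pos; [apply Rabs_pos|lra]. }
    replace (theta ^ 2 * (B * (a1 + B / g)))
      with (theta * (B * (a1 * theta)) + theta * B * theta * (B / g)) by ring.
    lra. }
  rewrite <- key, Rabs_mult, (Rabs_right (nu + d i)) in hb by lra.
  unfold a2. apply Rmult_le_reg_l with (g / 2); [lra|].
  replace (g / 2 * (a1 * (a1 + B / g) * theta ^ 2)) with (theta ^ 2 * (B * (a1 + B / g)))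
    by (unfold a1; field; lra).
  eapply Rle_trans; [|exact hb]. apply Rmult_le_compat_r; [apply Rabs_pos|lra].
Qed.

Lemma second_order_residual i : dom i ->
  Rabs (x i - unit_star i - theta * correction i) <= a2 * theta ^ 2.
Proof.
  intros Hi. unfold unit_star. destruct (eq_dec i star) as [->|ne].
  - unfold correction. destruct (eq_dec star star) as [_|]; [|contradiction].
    rewrite Hone. replace (1 - 1 - theta * 0) with 0 by ring. rewrite Rabs_R0.
    assert (h := a2_nonneg). assert (0 <= theta ^ 2) by (apply pow2_ge_0). nra.
  - rewrite Rminus_0_r. apply second_order; auto.
Qed.

(* third order: the eigenvalue, read off the [star] row of the eigen equation *)
Theorem eigenvalue_expansion :
  Rabs (nu - (- d star + theta * L unit_star star + theta ^ 2 * L correction star))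
    <= a3 * theta ^ 3.
Proof.
  set (r := fun k => x k - unit_star k - theta * correction k).
  assert (hR : Rabs (L r star) <= B * (a2 * theta ^ 2))
    by (apply Hbound; auto; apply second_order_residual).
  assert (hsplit : L x star = L unit_star star + theta * L correction star + L r star).
  { rewrite <- (Rmult_1_l (L r star)), <- Hlin, <- Hlin by auto.
    apply Hext; auto. intros; unfold r; ring. }
  assert (he : nu + d star = theta * L x star).
  { assert (h := Heig star Hstar). rewrite Hone in h. lra. }
  replace (nu - (- d star + theta * L unit_star star + theta ^ 2 * L correction star))
    with (theta * L r star).
  2:{ rewrite hsplit in he.
      replace nu with (theta * (L unit_star star + theta * L correction star + L r star)
                       - d star) by lra.
      ring. }
  rewrite Rabs_mult, (Rabs_right theta) by lra.
  unfold a3. replace (B * a2 * theta ^ 3) with (theta * (B * (a2 * theta ^ 2))) by ring.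
  apply Rmult_le_compat_l; lra.
Qed.

End Normalized.

Lemma window_ends_far nu i : nu = - d star - g / 2 \/ nu = - d star + g / 2 -> dom i ->
  g / 2 <= Rabs (nu + d i).
Proof.
  intros Hnu Hi. assert (h := d_ge_star i Hi).
  destruct (eq_dec i star) as [->|ne].
  - destruct Hnu as [-> | ->].
    + replace (- d star - g / 2 + d star) with (- (g / 2)) by ring.
      rewrite Rabs_Ropp, Rabs_right; lra.
    + rewrite Rabs_right; lra.
  - assert (h2 := Hgap i Hi ne). destruct Hnu as [-> | ->]; rewrite Rabs_right; lra.
Qed.

(** Existence of an eigenvalue near [-d star], through a finite coordinate system
    in which [theta * L - diag(d)] becomes a [K x K] matrix; coordinates outside
    [dom] carry decoupled rows whose diagonal entries respect the gap. *)
Section Coordinates.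

Variable K : nat.
Variable enc : I -> nat.
Variable dec : nat -> I.
Variable E : nat -> nat -> R.
Hypothesis Henc : forall i, dom i -> (enc i < K)%nat /\ dec (enc i) = i.
Hypothesis Hdec : forall k, (k < K)%nat -> dom (dec k) -> enc (dec k) = k.
Hypothesis Hrow : forall k v, (k < K)%nat -> dom (dec k) ->
  sumN K (fun k' => E k k' * v k') = L (fun i => v (enc i)) (dec k).
Hypothesis Hout : forall k, (k < K)%nat -> ~ dom (dec k) ->
  (forall k', (k' < K)%nat -> E k k' = 0) /\ d star + g <= d (dec k).

Lemma decode_eigen t nu v : coord_eigen K (fun k => d (dec k)) E t nu v ->
  eigen t nu (fun i => v (enc i)).
Proof.
  intros H i Hi. destruct (Henc i Hi) as [hk hdec].
  assert (h := H _ hk). rewrite Hrow, hdec in h by (auto; rewrite hdec; auto). exact h.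
Qed.

Lemma outside_rows_vanish t nu v k : coord_eigen K (fun k => d (dec k)) E t nu v ->
  - d star - g / 2 <= nu -> (k < K)%nat -> ~ dom (dec k) -> v k = 0.
Proof.
  intros H Hnu hk hd. destruct (Hout k hk hd) as [hE hgap].
  assert (h := H k hk). rewrite sumN_zero in h by (intros k' hk'; rewrite hE by auto; ring).
  assert (hz : (nu + d (dec k)) * v k = 0) by lra.
  apply Rmult_integral in hz. destruct hz as [hz|hz]; [lra|auto].
Qed.

Lemma perturbed_eigenvalue_exists theta : 0 <= theta -> theta * B <= g / 4 ->
  exists nu, - d star - g / 2 <= nu /\ is_eig theta nu.
Proof.
  intros Ht HtB. destruct (Henc star Hstar) as [hk0 hdec0].
  destruct (Continuation.eigenvalue_continuation K (fun k => d (dec k)) E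
    (- d star - g / 2) (- d star + g / 2) theta (enc star))
    as [nu [[h1 h2] [v [[k [hk hv]] hev]]]].
  - lra.
  - auto.
  - intros t nu v [ht1 ht2] hnu hev k hk.
    destruct (classic (dom (dec k))) as [hd|hd].
    + rewrite <- (Hdec k hk hd).
      apply (eigen_vanishes t nu (fun i => v (enc i))); auto.
      * assert (t * B <= theta * B) by (apply Rmult_le_compat_r; lra). lra.
      * intros i Hi. apply window_ends_far; auto.
      * apply decode_eigen; auto.
    + apply (outside_rows_vanish t nu v k); auto. destruct hnu; lra.
  - auto.
  - rewrite hdec0. lra.
  - intros k hk hne. destruct (classic (dom (dec k))) as [hd|hd].
    + assert (hs : dec k <> star) by (intros e; apply hne; rewrite <- (Hdec k hk hd), e; auto).
      assert (h := Hgap (dec k) hd hs). lra.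
    + destruct (Hout k hk hd) as [_ h]. lra.
  - exists nu. split; [auto|]. exists (fun i => v (enc i)). split; [|apply decode_eigen; auto].
    destruct (classic (dom (dec k))) as [hd|hd].
    + exists (dec k). split; [auto|]. rewrite (Hdec k hk hd). auto.
    + exfalso. apply hv. apply (outside_rows_vanish theta nu v k); auto.
Qed.

Lemma largest_eigenvalue_localized theta nu : 0 < theta -> theta * B <= g / 4 ->
  is_largest (is_eig theta) nu -> - d star - g / 2 <= nu.
Proof.
  intros Ht HtB [_ Hmax].
  destruct (perturbed_eigenvalue_exists theta ltac:(lra) HtB) as [nu' [h1 h2]].
  assert (h := Hmax nu' h2). lra.
Qed.

Theorem largest_eigenvalue_expansion theta nu : 0 < theta -> theta * B <= g / 4 ->
  is_largest (is_eig theta) nu ->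
  Rabs (nu - (- d star + theta * L unit_star star + theta ^ 2 * L correction star))
    <= a3 * theta ^ 3.
Proof.
  intros Ht HtB Hlarge.
  assert (hlo := largest_eigenvalue_localized theta nu Ht HtB Hlarge).
  destruct Hlarge as [[x [Hnz Heig]] _].
  destruct (eigen_localized theta nu x ltac:(lra) HtB hlo Hnz Heig) as [hnu [hx hmax]].
  destruct (eigen_normalize theta nu x Heig hx hmax) as [hy [hy1 hyle]].
  exact (eigenvalue_expansion theta nu _ Ht HtB hy hy1 hyle hnu).
Qed.

Theorem largest_eigenvector_expansion theta nu x : 0 < theta -> theta * B <= g / 4 ->
  is_largest (is_eig theta) nu -> nonzero_on x -> eigen theta nu x ->
  x star <> 0 /\ (forall i, dom i -> Rabs (x i) <= Rabs (x star)) /\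
  forall i, dom i -> i <> star ->
    Rabs (/ x star * x i) <= a1 * theta /\
    Rabs (/ x star * x i - theta * correction i) <= a2 * theta ^ 2.
Proof.
  intros Ht HtB Hlarge Hnz Heig.
  assert (hlo := largest_eigenvalue_localized theta nu Ht HtB Hlarge).
  destruct (eigen_localized theta nu x ltac:(lra) HtB hlo Hnz Heig) as [hnu [hx hmax]].
  destruct (eigen_normalize theta nu x Heig hx hmax) as [hy [hy1 hyle]].
  split; [auto|split; [auto|]]. intros i Hi ne. split.
  - apply (first_order theta nu (fun k => / x star * x k)); auto.
  - apply (second_order theta nu (fun k => / x star * x k)); auto.
Qed.

Theorem largest_eigenpair_expansion theta nu : 0 < theta -> theta * B <= g / 4 ->
  is_largest (is_eig theta) nu ->
  Rabs (nu - (- d star + theta * L unit_star star + theta ^ 2 * L correction star))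
    <= a3 * theta ^ 3 /\
  forall x, nonzero_on x -> eigen theta nu x ->
    x star <> 0 /\ forall i, dom i -> i <> star ->
      Rabs (/ x star * x i) <= a1 * theta /\
      Rabs (/ x star * x i - theta * correction i) <= a2 * theta ^ 2.
Proof.
  intros Ht HtB Hl. split; [apply largest_eigenvalue_expansion; auto|].
  intros x Hnz Heig.
  destruct (largest_eigenvector_expansion theta nu x Ht HtB Hl Hnz Heig) as [hx [_ hoff]].
  split; auto.
Qed.

End Coordinates.

End Perturbation.

(** * The operator [Theta^(1)] on [R^{T_N}]. *)

Lemma symm_le S j l : (j <= l)%nat -> symm S j l = S j l.
Proof. intros H. unfold symm. rewrite (proj2 (Nat.leb_le j l) H). reflexivity. Qed.

Lemma symm_comm S j l : symm S j l = symm S l j.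
Proof.
  unfold symm. destruct (Nat.leb_spec j l), (Nat.leb_spec l j); auto.
  - replace l with j by lia. reflexivity.
  - lia.
Qed.

Lemma symm_ext N X Y a b : (a < N)%nat -> (b < N)%nat ->
  (forall j l, (j <= l)%nat -> (l < N)%nat -> X j l = Y j l) -> symm X a b = symm Y a b.
Proof. intros Ha Hb H. unfold symm. destruct (Nat.leb_spec a b); apply H; lia. Qed.

Section ThetaOperator.

Variables (N : nat) (G : nat -> nat -> R).

Lemma ThetaOp_ext X Y j l : (j < N)%nat -> (l < N)%nat ->
  (forall a b, (a <= b)%nat -> (b < N)%nat -> X a b = Y a b) ->
  ThetaOp N G X j l = ThetaOp N G Y j l.
Proof.
  intros Hj Hl H. unfold ThetaOp. rewrite !(symm_ext N X Y) by auto.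
  f_equal. apply sumN_ext. intros n Hn. rewrite !(symm_ext N X Y) by auto. reflexivity.
Qed.

Lemma ThetaOp_lin X Y c j l :
  ThetaOp N G (fun a b => X a b + c * Y a b) j l = ThetaOp N G X j l + c * ThetaOp N G Y j l.
Proof.
  assert (Hs : forall a b, symm (fun a b => X a b + c * Y a b) a b = symm X a b + c * symm Y a b)
    by (intros a b; unfold symm; destruct (Nat.leb a b); reflexivity).
  unfold ThetaOp. rewrite !Hs.
  rewrite (sumN_ext N _ (fun n =>
      (if orb (Nat.eqb n j) (Nat.eqb n l) then 0
       else G l n * (symm X j n - symm X j l) + G j n * (symm X n l - symm X j l))
    + c * (if orb (Nat.eqb n j) (Nat.eqb n l) then 0
       else G l n * (symm Y j n - symm Y j l) + G j n * (symm Y n l - symm Y j l)))).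
  - rewrite sumN_plus, sumN_scal. ring.
  - intros n _. rewrite !Hs. destruct (orb (Nat.eqb n j) (Nat.eqb n l)); ring.
Qed.

Lemma ThetaOp_zero j l : ThetaOp N G (fun _ _ => 0) j l = 0.
Proof.
  unfold ThetaOp, symm. rewrite sumN_zero.
  - destruct (Nat.leb j l), (Nat.leb j j), (Nat.leb l l); ring.
  - intros n _. destruct (orb (Nat.eqb n j) (Nat.eqb n l)); [reflexivity|].
    destruct (Nat.leb j n), (Nat.leb n l), (Nat.leb j l); ring.
Qed.

Lemma ThetaOp_sum n (v : nat -> R) (F : nat -> nat -> nat -> R) j l :
  ThetaOp N G (fun a b => sumN n (fun k => v k * F k a b)) j l =
  sumN n (fun k => v k * ThetaOp N G (F k) j l).
Proof.
  induction n as [|n IH]; [apply ThetaOp_zero|].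
  change (ThetaOp N G (fun a b => sumN n (fun k => v k * F k a b) + v n * F n a b) j l =
    sumN n (fun k => v k * ThetaOp N G (F k) j l) + v n * ThetaOp N G (F n) j l).
  rewrite ThetaOp_lin, IH. reflexivity.
Qed.

Lemma ThetaOp_bound X m gm j l :
  (forall a b, (a < N)%nat -> (b < N)%nat -> Rabs (G a b) <= gm) ->
  (forall a b, (a <= b)%nat -> (b < N)%nat -> Rabs (X a b) <= m) ->
  (j < N)%nat -> (l < N)%nat ->
  Rabs (ThetaOp N G X j l) <= (8 + 4 * INR N) * gm * m.
Proof.
  intros HG HX Hj Hl.
  assert (Hm : 0 <= m) by (eapply Rle_trans; [apply Rabs_pos|apply (HX l l); lia]).
  assert (Hgm : 0 <= gm) by (eapply Rle_trans; [apply Rabs_pos|apply (HG l l); auto]).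
  assert (Hs : forall a b, (a < N)%nat -> (b < N)%nat -> Rabs (symm X a b) <= m)
    by (intros a b Ha Hb; unfold symm; destruct (Nat.leb_spec a b); apply HX; lia).
  assert (Hd : forall a b c e, (a < N)%nat -> (b < N)%nat -> (c < N)%nat -> (e < N)%nat ->
      Rabs (G a b * (symm X c e - symm X j l)) <= gm * (2 * m)).
  { intros a b c e Ha Hb Hc He. rewrite Rabs_mult.
    apply Rmult_le_compat; [apply Rabs_pos|apply Rabs_pos|auto|].
    unfold Rminus. eapply Rle_trans; [apply Rabs_triang|]. rewrite Rabs_Ropp.
    assert (h1 := Hs c e Hc He). assert (h2 := Hs j l Hj Hl). lra. }
  assert (h1 : Rabs (2 * G j l * (if Nat.eqb j l then 0 else 1) *
      (symm X j j + symm X l l - 2 * symm X j l)) <= 8 * gm * m).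
  { destruct (Nat.eqb j l).
    - rewrite Rmult_0_r, Rmult_0_l, Rabs_R0. nra.
    - replace (2 * G j l * 1 * (symm X j j + symm X l l - 2 * symm X j l))
        with (2 * (G j l * (symm X j j - symm X j l)) + 2 * (G j l * (symm X l l - symm X j l)))
        by ring.
      eapply Rle_trans; [apply Rabs_triang|].
      rewrite !(Rabs_mult 2), (Rabs_right 2) by lra.
      assert (a1 := Hd j l j j Hj Hl Hj Hj). assert (a2 := Hd j l l l Hj Hl Hl Hl). lra. }
  assert (h2 : Rabs (sumN N (fun n => if orb (Nat.eqb n j) (Nat.eqb n l) then 0
      else G l n * (symm X j n - symm X j l) + G j n * (symm X n l - symm X j l)))
      <= INR N * (4 * gm * m)).
  { apply sumN_abs_le. intros n Hn. destruct (orb (Nat.eqb n j) (Nat.eqb n l)).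
    - rewrite Rabs_R0. nra.
    - eapply Rle_trans; [apply Rabs_triang|].
      assert (b1 := Hd l n j n Hl Hn Hj Hn). assert (b2 := Hd j n n l Hj Hn Hn Hl). lra. }
  unfold ThetaOp. eapply Rle_trans; [apply Rabs_triang|]. lra.
Qed.

Lemma ThetaOp_diag X js :
  ThetaOp N G X js js =
  2 * sumN N (fun n => if Nat.eqb n js then 0 else G js n * (symm X js n - symm X js js)).
Proof.
  unfold ThetaOp. rewrite Nat.eqb_refl, <- sumN_scal.
  replace (2 * G js js * 0 * (symm X js js + symm X js js - 2 * symm X js js)) with 0 by ring.
  rewrite Rplus_0_l. apply sumN_ext. intros n _. rewrite Bool.orb_diag.
  destruct (Nat.eqb n js); [ring|]. rewrite (symm_comm X n js). ring.
Qed.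

Lemma symm_W0 js a b : symm (W0 js) a b = W0 js a b.
Proof.
  unfold symm, W0. destruct (Nat.leb a b); [reflexivity|].
  destruct (Nat.eqb a js), (Nat.eqb b js); reflexivity.
Qed.

(* Off [(js, js)], [Theta^(1) W0] is [(Lam_j + Lam_l - 2 Lam_js) W1]: this is
   how [W1] solves the first order equation. *)
Lemma ThetaOp_W0 Lam js j l :
  (forall a, (a < N)%nat -> a <> js -> Lam a - Lam js <> 0) ->
  (j <= l)%nat -> (l < N)%nat -> ~ (j = js /\ l = js) ->
  ThetaOp N G (W0 js) j l = (Lam j + Lam l - 2 * Lam js) * W1 G Lam js j l.
Proof.
  intros HL Hjl Hl Hne. unfold ThetaOp. rewrite !symm_W0.
  rewrite sumN_zero.
  2:{ intros n _. rewrite !symm_W0. unfold W0.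
      destruct (Nat.eqb_spec n j), (Nat.eqb_spec n l); simpl; try reflexivity.
      destruct (Nat.eqb_spec j js), (Nat.eqb_spec l js), (Nat.eqb_spec n js);
        simpl; try ring; lia. }
  unfold W1, W0. destruct (Nat.eqb_spec j js) as [->|hj].
  - rewrite (proj2 (Nat.ltb_lt js l)) by lia.
    destruct (Nat.eqb_spec js l); [lia|]. destruct (Nat.eqb_spec l js); [lia|].
    simpl. field. apply HL; lia.
  - destruct (Nat.eqb_spec l js) as [->|hl].
    + rewrite (proj2 (Nat.ltb_lt j js)) by lia. rewrite (proj2 (Nat.eqb_neq j js) hj). simpl. field. apply HL; lia.
    + simpl. destruct (Nat.eqb j l); simpl; ring.
Qed.

End ThetaOperator.

(** * [theta * Theta^(1) - Psi] as an instance of the perturbation setting. *)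

Definition pair_eq_dec (p q : nat * nat) : {p = q} + {p <> q}.
Proof. decide equality; apply Nat.eq_dec. Defined.

(* [T_N] as a subset of [nat * nat], coded into [{0, ..., N*N - 1}] by [(a, b) |-> a N + b] *)
Definition pair_dom (N : nat) (p : nat * nat) : Prop := (fst p <= snd p < N)%nat.
Definition pair_enc (N : nat) (p : nat * nat) : nat := (fst p * N + snd p)%nat.
Definition pair_dec (N : nat) (k : nat) : nat * nat := (k / N, k mod N)%nat.

Definition pair_op (N : nat) (G : nat -> nat -> R) (x : nat * nat -> R) (p : nat * nat) : R :=
  ThetaOp N G (fun a b => x (a, b)) (fst p) (snd p).
Definition pair_diag (Lam : nat -> R) (p : nat * nat) : R := Lam (fst p) + Lam (snd p).

Definition unit_code (N k' a b : nat) : R := if Nat.eqb k' (a * N + b) then 1 else 0.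
Definition pair_matrix (N : nat) (G : nat -> nat -> R) (k k' : nat) : R :=
  if Nat.leb (k / N) (k mod N) then ThetaOp N G (unit_code N k') (k / N) (k mod N) else 0.

Lemma pair_code_inv N a b : (b < N)%nat -> ((a * N + b) / N = a /\ (a * N + b) mod N = b)%nat.
Proof.
  intros Hb. split.
  - rewrite Nat.div_add_l, Nat.div_small by lia. lia.
  - rewrite Nat.add_comm, Nat.Div0.mod_add. apply Nat.mod_small; auto.
Qed.

Lemma pair_code_split N k : (N <> 0)%nat -> (k = k / N * N + k mod N /\ k mod N < N)%nat.
Proof.
  intros HN. split; [|apply Nat.mod_upper_bound; auto].
  rewrite (Nat.div_mod_eq k N) at 1. lia.
Qed.

Section PairOperator.

Variables (N : nat) (G : nat -> nat -> R).

(* the hypotheses of section [Perturbation], except the gap condition *)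
Lemma pair_op_ext x y : (forall p, pair_dom N p -> x p = y p) ->
  forall p, pair_dom N p -> pair_op N G x p = pair_op N G y p.
Proof.
  intros H [a b] [Hab Hb]. unfold pair_op; simpl in *.
  apply ThetaOp_ext; try lia. intros j l Hjl Hl. apply (H (j, l)). split; simpl; lia.
Qed.

Lemma pair_op_lin x y c p :
  pair_op N G (fun k => x k + c * y k) p = pair_op N G x p + c * pair_op N G y p.
Proof. apply ThetaOp_lin. Qed.

Lemma pair_op_bound gm : (forall a b, (a < N)%nat -> (b < N)%nat -> Rabs (G a b) <= gm) ->
  forall x m, (forall p, pair_dom N p -> Rabs (x p) <= m) ->
  forall p, pair_dom N p -> Rabs (pair_op N G x p) <= (8 + 4 * INR N) * gm * m.
Proof.
  intros HG x m Hx [a b] [Hab Hb]. simpl in *. apply ThetaOp_bound; simpl; auto; try lia.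
  intros j l Hjl Hl. apply (Hx (j, l)). split; simpl; lia.
Qed.

Lemma pair_dominant (HN : (0 < N)%nat) (x : nat * nat -> R) :
  exists p, pair_dom N p /\ forall p', pair_dom N p' -> Rabs (x p') <= Rabs (x p).
Proof.
  set (h := fun k => if Nat.leb (k / N) (k mod N) then x (k / N, k mod N)%nat else 0).
  destruct (dominant_index (N * N) h ltac:(nia)) as [k [Hk Hmax]].
  assert (Hall : forall p', pair_dom N p' -> Rabs (x p') <= Rabs (h k)).
  { intros [a b] [Hab Hb]. simpl in *. destruct (pair_code_inv N a b Hb) as [e1 e2].
    assert (hk := Hmax (a * N + b)%nat ltac:(nia)). unfold h in hk at 1.
    rewrite e1, e2, (proj2 (Nat.leb_le a b) Hab) in hk. exact hk. }
  destruct (pair_code_split N k ltac:(lia)) as [e1 e2].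
  unfold h in Hall. destruct (Nat.leb_spec (k / N) (k mod N)) as [hle|hgt].
  - exists (k / N, k mod N)%nat. split; [split; simpl; lia|exact Hall].
  - exists (0, 0)%nat. split; [split; simpl; lia|].
    intros p' Hp'. assert (h1 := Hall p' Hp'). assert (h2 := Rabs_pos (x (0, 0)%nat)).
    rewrite Rabs_R0 in h1. lra.
Qed.

Lemma pair_enc_ok p : pair_dom N p -> (pair_enc N p < N * N)%nat /\ pair_dec N (pair_enc N p) = p.
Proof.
  destruct p as [a b]. intros [Hab Hb]. simpl in *. unfold pair_enc, pair_dec; simpl.
  destruct (pair_code_inv N a b Hb) as [e1 e2]. rewrite e1, e2. split; [nia|reflexivity].
Qed.

Lemma pair_dec_ok (HN : (0 < N)%nat) k : pair_enc N (pair_dec N k) = k.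
Proof.
  unfold pair_enc, pair_dec; simpl. destruct (pair_code_split N k ltac:(lia)) as [e _]. lia.
Qed.

Lemma pair_rows k v : (k < N * N)%nat -> pair_dom N (pair_dec N k) ->
  sumN (N * N) (fun k' => pair_matrix N G k k' * v k') =
  pair_op N G (fun p => v (pair_enc N p)) (pair_dec N k).
Proof.
  intros Hk [Hab Hb]. unfold pair_dec, pair_matrix, pair_op, pair_enc in *; simpl in *.
  rewrite (proj2 (Nat.leb_le _ _) Hab).
  rewrite (sumN_ext _ _ (fun k' => v k' * ThetaOp N G (unit_code N k') (k / N) (k mod N)))
    by (intros; ring).
  rewrite <- ThetaOp_sum. apply ThetaOp_ext; [nia|lia|].
  intros a b Hab' Hb'. unfold unit_code.
  rewrite (sumN_ext _ _ (fun k' => if Nat.eqb k' (a * N + b) then v k' else 0))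
    by (intros k' _; destruct (Nat.eqb k' (a * N + b)); ring).
  apply sumN_delta. nia.
Qed.

Lemma pair_rows_below k k' : (k < N * N)%nat -> ~ pair_dom N (pair_dec N k) ->
  pair_matrix N G k k' = 0.
Proof.
  intros Hk Hout. unfold pair_matrix.
  destruct (Nat.leb_spec (k / N) (k mod N)) as [hle|]; [|reflexivity].
  exfalso. apply Hout. split; cbn [fst snd]; [exact hle|apply Nat.mod_upper_bound; nia].
Qed.

Lemma pair_eigvec_iff (Lam : nat -> R) (theta nu : R) (S : nat -> nat -> R) :
  is_eigvecT N (opT N G Lam theta) nu S <->
  nonzero_on _ (pair_dom N) (fun p => S (fst p) (snd p)) /\
  eigen _ (pair_dom N) (pair_op N G) (pair_diag Lam) theta nu (fun p => S (fst p) (snd p)).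
Proof.
  unfold is_eigvecT, nonzero_on, eigen, opT, PsiOp, pair_op, pair_diag, pair_dom. split.
  - intros [[j [l [Hjl [Hl Hnz]]]] H]. split.
    + exists (j, l). auto.
    + intros [a b] [Hab Hb]. cbn [fst snd] in *.
      assert (h := H a b Hab Hb). rewrite symm_le in h by auto. exact h.
  - intros [[[j l] [Hp Hnz]] H]. split.
    + exists j, l. destruct Hp. auto.
    + intros a b Hab Hb. rewrite symm_le by auto. apply (H (a, b)). auto.
Qed.

Lemma pair_is_eig_iff (Lam : nat -> R) (theta nu : R) :
  is_eigT N (opT N G Lam theta) nu <->
  is_eig _ (pair_dom N) (pair_op N G) (pair_diag Lam) theta nu.
Proof.
  split.
  - intros [S HS]. exists (fun p => S (fst p) (snd p)). apply pair_eigvec_iff, HS.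
  - intros [x [[[a b] [Hp Hnz]] Hx]]. exists (fun a b => x (a, b)).
    apply pair_eigvec_iff. split; [exists (a, b); auto|].
    intros [a' b'] Hp'. apply (Hx (a', b') Hp').
Qed.

End PairOperator.

(** * [theta * Gamma^(1) - diag(Lambda)] as an instance of the perturbation setting. *)

Definition vec_dom (N : nat) (j : nat) : Prop := (j < N)%nat.
Definition vec_op (N : nat) (G : nat -> nat -> R) (x : nat -> R) (j : nat) : R :=
  sumN N (fun l => G j l * x l).

Section VectorOperator.

Variables (N : nat) (G : nat -> nat -> R).

Lemma vec_op_ext x y : (forall j, vec_dom N j -> x j = y j) ->
  forall j, vec_dom N j -> vec_op N G x j = vec_op N G y j.
Proof. intros H j _. apply sumN_ext. intros l Hl. rewrite H; auto. Qed.

Lemma vec_op_lin x y c j :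
  vec_op N G (fun k => x k + c * y k) j = vec_op N G x j + c * vec_op N G y j.
Proof.
  unfold vec_op. rewrite <- sumN_scal, <- sumN_plus. apply sumN_ext. intros; ring.
Qed.

Lemma vec_op_bound gm : (forall j, (j < N)%nat -> sumN N (fun l => Rabs (G j l)) <= gm) ->
  forall x m, (forall j, vec_dom N j -> Rabs (x j) <= m) ->
  forall j, vec_dom N j -> Rabs (vec_op N G x j) <= gm * m.
Proof.
  intros HG x m Hx j Hj. unfold vec_op.
  apply Rle_trans with (sumN N (fun l => Rabs (G j l) * m)).
  - clear HG Hj. induction N as [|n IH]; simpl; [rewrite Rabs_R0; lra|].
    eapply Rle_trans; [apply Rabs_triang|]. rewrite Rabs_mult.
    assert (h1 := IH (fun k hk => Hx k ltac:(unfold vec_dom in *; lia))).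
    assert (h2 := Hx n ltac:(unfold vec_dom; lia)).
    assert (h3 := Rmult_le_compat_l _ _ _ (Rabs_pos (G j n)) h2). lra.
  - assert (Hm : 0 <= m) by (eapply Rle_trans; [apply Rabs_pos|apply (Hx j Hj)]).
    rewrite (sumN_ext N _ (fun l => m * Rabs (G j l))), sumN_scal by (intros; ring).
    rewrite Rmult_comm. apply Rmult_le_compat_r; auto.
Qed.

Lemma vec_dominant (x : nat -> R) : (0 < N)%nat ->
  exists j, vec_dom N j /\ forall j', vec_dom N j' -> Rabs (x j') <= Rabs (x j).
Proof. intros HN. apply (dominant_index N x HN). Qed.

End VectorOperator.

(** * Sums and norms on [R^{T_N}]. *)

Section SumsOnTN.

Variable N : nat.

Lemma sumT_ext F F' : (forall a b, (a <= b)%nat -> (b < N)%nat -> F a b = F' a b) ->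
  sumT N F = sumT N F'.
Proof.
  intros H. unfold sumT. apply sumN_ext. intros a _. apply sumN_ext. intros b Hb.
  destruct (Nat.leb_spec a b); [apply H; lia|reflexivity].
Qed.

Lemma sumT_plus F F' : sumT N (fun a b => F a b + F' a b) = sumT N F + sumT N F'.
Proof.
  unfold sumT. rewrite <- sumN_plus. apply sumN_ext. intros a _.
  rewrite <- sumN_plus. apply sumN_ext. intros b _. destruct (Nat.leb a b); ring.
Qed.

Lemma sumT_point js c : (js < N)%nat ->
  sumT N (fun a b => if andb (Nat.eqb a js) (Nat.eqb b js) then c else 0) = c.
Proof.
  intros Hjs. unfold sumT.
  transitivity (sumN N (fun a => if Nat.eqb a js then c else 0)); [|apply sumN_delta; auto].
  apply sumN_ext. intros a _. destruct (Nat.eqb_spec a js) as [->|ne]; simpl.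
  - transitivity (sumN N (fun b => if Nat.eqb b js then c else 0)); [|apply sumN_delta; auto].
    apply sumN_ext. intros b _.
    destruct (Nat.eqb_spec b js) as [->|]; [rewrite Nat.leb_refl; reflexivity|].
    destruct (Nat.leb js b); reflexivity.
  - apply sumN_zero. intros b _. destruct (Nat.leb a b); reflexivity.
Qed.

Lemma sumT_split js F : (js < N)%nat ->
  sumT N F = F js js +
    sumT N (fun a b => if andb (Nat.eqb a js) (Nat.eqb b js) then 0 else F a b).
Proof.
  intros Hjs. rewrite <- (sumT_point js (F js js) Hjs). rewrite <- sumT_plus.
  apply sumT_ext. intros a b _ _.
  destruct (Nat.eqb_spec a js) as [->|], (Nat.eqb_spec b js) as [->|]; simpl; ring.
Qed.

Lemma sumT_nonneg F : (forall a b, (a <= b)%nat -> (b < N)%nat -> 0 <= F a b) ->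
  0 <= sumT N F.
Proof.
  intros H. unfold sumT. apply sumN_nonneg. intros a _. apply sumN_nonneg. intros b Hb.
  destruct (Nat.leb_spec a b); [apply H; lia|lra].
Qed.

Lemma sumT_le_const F c : 0 <= c ->
  (forall a b, (a <= b)%nat -> (b < N)%nat -> F a b <= c) -> sumT N F <= INR N * (INR N * c).
Proof.
  intros Hc H. unfold sumT. rewrite <- !sumN_const. apply sumN_le. intros a _.
  apply sumN_le. intros b Hb.
  destruct (Nat.leb_spec a b); [apply H; lia|lra].
Qed.

Lemma normT_bound X e : 0 <= e ->
  (forall a b, (a <= b)%nat -> (b < N)%nat -> Rabs (X a b) <= e) -> normT N X <= INR N * e.
Proof.
  intros He H. unfold normT. assert (hN := pos_INR N).
  rewrite <- (sqrt_square (INR N * e)) by nra. apply sqrt_le_1_alt.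
  replace (INR N * e * (INR N * e)) with (INR N * (INR N * (e * e))) by ring.
  apply sumT_le_const; [nra|]. intros a b Hab Hb.
  assert (h := H a b Hab Hb). rewrite <- Rsqr_pow2, Rsqr_abs. unfold Rsqr.
  assert (h2 := Rabs_pos (X a b)). nra.
Qed.

Lemma unit_vector_star_entry W js eps : (js < N)%nat -> normT N W = 1 -> 0 < W js js ->
  (forall a b, (a <= b)%nat -> (b < N)%nat -> ~ (a = js /\ b = js) ->
     Rabs (W a b) <= W js js * eps) ->
  W js js <= 1 /\ 1 - W js js <= INR N * INR N * eps ^ 2.
Proof.
  intros Hjs Hn Hw H. set (w := W js js) in *.
  assert (hsum : sumT N (fun a b => W a b ^ 2) = 1).
  { assert (h0 : 0 <= sumT N (fun a b => W a b ^ 2))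
      by (apply sumT_nonneg; intros; apply pow2_ge_0).
    unfold normT in Hn. rewrite <- (sqrt_sqrt _ h0), Hn. ring. }
  rewrite (sumT_split _ _ Hjs) in hsum. fold w in hsum.
  set (rest := sumT N _) in hsum.
  assert (hrest0 : 0 <= rest).
  { apply sumT_nonneg. intros a b _ _. destruct (andb _ _); [lra|apply pow2_ge_0]. }
  assert (hrest : rest <= INR N * (INR N * (w * eps) ^ 2)).
  { apply sumT_le_const; [apply pow2_ge_0|]. intros a b Hab Hb.
    destruct (Nat.eqb_spec a js), (Nat.eqb_spec b js); cbn [andb]; try (apply pow2_ge_0);
      assert (h := H a b Hab Hb ltac:(tauto)); assert (h0 := Rabs_pos (W a b));
      rewrite <- (pow2_abs (W a b)); apply pow_incr; lra. }
  assert (hw1 : w <= 1) by nra.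
  split; [auto|].
  assert (hN := pos_INR N). assert (0 <= INR N * INR N * eps ^ 2) by
    (apply Rmult_le_pos; [nra|apply pow2_ge_0]).
  replace (INR N * (INR N * (w * eps) ^ 2)) with (w ^ 2 * (INR N * INR N * eps ^ 2))
    in hrest by ring.
  assert (w ^ 2 * (INR N * INR N * eps ^ 2) <= INR N * INR N * eps ^ 2).
  { rewrite <- (Rmult_1_l (INR N * INR N * eps ^ 2)) at 2.
    apply Rmult_le_compat_r; [auto|nra]. }
  nra.
Qed.

End SumsOnTN.

(** * The spectral setting of the theorem. *)

(* a crude bound on the size of [Gamma^(1)], and a common operator bound [B]
   for [Theta^(1)] and [Gamma^(1)] *)
Definition Gsum (N : nat) (G : nat -> nat -> R) : R :=
  sumN N (fun j => sumN N (fun l => Rabs (G j l))).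
Definition Bconst (N : nat) (G : nat -> nat -> R) : R := (8 + 4 * INR N) * Gsum N G + 1.

Lemma is_largest_iff (P Q : R -> Prop) nu : (forall nu', P nu' <-> Q nu') ->
  is_largest P nu -> is_largest Q nu.
Proof. intros H [HP Hmax]. split; [apply H, HP|]. intros nu' HQ. apply Hmax, H, HQ. Qed.

Section Spectrum.

Variables (N : nat) (Lam : nat -> R) (G : nat -> nat -> R) (js : nat) (g : R).
Hypothesis Hjs : (js < N)%nat.
Hypothesis Hg : 0 < g.
Hypothesis Hgap : forall j, (j < N)%nat -> j <> js -> Lam js + g <= Lam j.
Hypothesis HGsym : forall j l, (j < N)%nat -> (l < N)%nat -> G j l = G l j.
Hypothesis HGdiag : G js js = - sumN N (fun l => if Nat.eqb l js then 0 else G js l).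

Lemma Gsum_row j : (j < N)%nat -> sumN N (fun l => Rabs (G j l)) <= Gsum N G.
Proof.
  intros Hj. unfold Gsum. apply (sumN_ge_term N (fun j => sumN N (fun l => Rabs (G j l)))); auto.
  intros k _. apply sumN_nonneg. intros; apply Rabs_pos.
Qed.

Lemma Gsum_entry a b : (a < N)%nat -> (b < N)%nat -> Rabs (G a b) <= Gsum N G.
Proof.
  intros Ha Hb. eapply Rle_trans; [|apply (Gsum_row a Ha)].
  apply (sumN_ge_term N (fun l => Rabs (G a l))); auto. intros; apply Rabs_pos.
Qed.

Lemma Gsum_nonneg : 0 <= Gsum N G.
Proof. eapply Rle_trans; [apply Rabs_pos|apply (Gsum_entry js js Hjs Hjs)]. Qed.

Lemma Bconst_pos : 0 < Bconst N G.
Proof. unfold Bconst. assert (h := pos_INR N). assert (h2 := Gsum_nonneg). nra. Qed.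

Lemma pair_bound x m : (forall p, pair_dom N p -> Rabs (x p) <= m) ->
  forall p, pair_dom N p -> Rabs (pair_op N G x p) <= Bconst N G * m.
Proof.
  intros Hx p Hp.
  assert (Hm : 0 <= m) by (eapply Rle_trans; [apply Rabs_pos|apply (Hx (js, js)); split; simpl; lia]).
  eapply Rle_trans; [apply (pair_op_bound N G (Gsum N G) Gsum_entry x m Hx p Hp)|].
  unfold Bconst. nra.
Qed.

Lemma vec_bound x m : (forall j, vec_dom N j -> Rabs (x j) <= m) ->
  forall j, vec_dom N j -> Rabs (vec_op N G x j) <= Bconst N G * m.
Proof.
  intros Hx j Hj.
  assert (Hm : 0 <= m) by (eapply Rle_trans; [apply Rabs_pos|apply (Hx js Hjs)]).
  eapply Rle_trans; [apply (vec_op_bound N G (Gsum N G) Gsum_row x m Hx j Hj)|].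
  unfold Bconst. assert (h := pos_INR N). assert (h2 := Gsum_nonneg).
  assert (0 <= Gsum N G * m) by nra. assert (0 <= INR N * (Gsum N G * m)) by nra. nra.
Qed.

Lemma Lam_ge j : (j < N)%nat -> Lam js <= Lam j.
Proof. intros Hj. destruct (Nat.eq_dec j js) as [->|ne]; [lra|]. assert (h := Hgap j Hj ne). lra. Qed.

Lemma pair_gap a b : (a < N)%nat -> (b < N)%nat -> ~ (a = js /\ b = js) ->
  2 * Lam js + g <= Lam a + Lam b.
Proof.
  intros Ha Hb Hn. assert (ha := Lam_ge a Ha). assert (hb := Lam_ge b Hb).
  destruct (Nat.eq_dec a js) as [->|na].
  - assert (h := Hgap b Hb ltac:(tauto)). lra.
  - assert (h := Hgap a Ha na). lra.
Qed.

Lemma pair_diag_gap p : pair_dom N p -> p <> (js, js) ->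
  pair_diag Lam (js, js) + g <= pair_diag Lam p.
Proof.
  destruct p as [a b]. intros [Hab Hb] Hne. unfold pair_diag; simpl in *.
  assert (h := pair_gap a b ltac:(lia) Hb ltac:(intros [-> ->]; auto)). lra.
Qed.

Lemma pair_rows_outside k : (k < N * N)%nat -> ~ pair_dom N (pair_dec N k) ->
  (forall k', (k' < N * N)%nat -> pair_matrix N G k k' = 0) /\
  pair_diag Lam (js, js) + g <= pair_diag Lam (pair_dec N k).
Proof.
  intros Hk Hout. split; [intros; apply pair_rows_below; auto|].
  assert (HN : (N <> 0)%nat) by lia. destruct (pair_code_split N k HN) as [e1 e2].
  unfold pair_dec, pair_diag in *; cbn [fst snd] in *.
  assert (hq : (k / N < N)%nat) by (apply Nat.Div0.div_lt_upper_bound; lia).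
  assert (hn : ~ ((k / N)%nat = js /\ k mod N = js)).
  { intros [h1 h2]. apply Hout. rewrite h1, h2. split; cbn [fst snd]; [lia|exact Hjs]. }
  assert (h := pair_gap (k / N)%nat (k mod N) hq e2 hn). lra.
Qed.


Lemma sumG_row : sumN N (fun n => if Nat.eqb n js then 0 else G js n) = sumG N G js.
Proof.
  unfold sumG. apply sumN_ext. intros n Hn. destruct (Nat.eqb n js); auto.
Qed.

Lemma W1_diag : W1 G Lam js js js = 0.
Proof. unfold W1. rewrite Nat.ltb_irrefl, !Bool.andb_false_r. reflexivity. Qed.

Lemma sumH_row :
  sumN N (fun n => if Nat.eqb n js then 0 else G js n * symm (W1 G Lam js) js n)
  = 2 * sumH N G Lam js.
Proof.
  unfold sumH. rewrite <- sumN_scal. apply sumN_ext. intros n Hn.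
  destruct (Nat.eqb_spec n js) as [e|ne]; [ring|].
  assert (h := Hgap n Hn ne). unfold symm, W1. rewrite (HGsym js n) by auto.
  destruct (Nat.leb_spec js n).
  - rewrite Nat.eqb_refl, (proj2 (Nat.ltb_lt js n)) by lia. simpl. field. lra.
  - rewrite (proj2 (Nat.eqb_neq n js) ne), Nat.eqb_refl, (proj2 (Nat.ltb_lt n js)) by lia.
    simpl. field. lra.
Qed.

Lemma pair_unit_star a b : unit_star _ pair_eq_dec (js, js) (a, b) = W0 js a b.
Proof.
  unfold unit_star, W0. destruct (pair_eq_dec (a, b) (js, js)) as [e|ne].
  - injection e as -> ->. rewrite Nat.eqb_refl. reflexivity.
  - destruct (Nat.eqb_spec a js) as [->|], (Nat.eqb_spec b js) as [->|]; auto.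
    contradiction.
Qed.

Lemma pair_unit_value :
  pair_op N G (unit_star _ pair_eq_dec (js, js)) (js, js) = - 2 * sumG N G js.
Proof.
  unfold pair_op; cbn [fst snd].
  rewrite (ThetaOp_ext N G _ (W0 js)) by (auto; intros; apply pair_unit_star).
  rewrite ThetaOp_diag, <- sumG_row, <- sumN_scal, <- sumN_scal.
  apply sumN_ext. intros n _. rewrite !symm_W0. unfold W0. rewrite Nat.eqb_refl.
  destruct (Nat.eqb n js); simpl; ring.
Qed.

Lemma pair_correction p : pair_dom N p ->
  correction _ pair_eq_dec (pair_op N G) (pair_diag Lam) (js, js) p = W1 G Lam js (fst p) (snd p).
Proof.
  destruct p as [a b]. intros [Hab Hb]. cbn [fst snd] in *. unfold correction.
  destruct (pair_eq_dec (a, b) (js, js)) as [e|ne].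
  - injection e as -> ->. symmetry. apply W1_diag.
  - assert (hn : ~ (a = js /\ b = js)) by (intros [-> ->]; auto).
    assert (hD := pair_gap a b ltac:(lia) Hb hn).
    unfold pair_op, pair_diag; cbn [fst snd].
    rewrite (ThetaOp_ext N G _ (W0 js)) by (try lia; intros; apply pair_unit_star).
    rewrite (ThetaOp_W0 N G Lam js a b) by (auto; intros c Hc Hcn; assert (h := Hgap c Hc Hcn); lra).
    field. lra.
Qed.

Lemma pair_correction_value :
  pair_op N G (correction _ pair_eq_dec (pair_op N G) (pair_diag Lam) (js, js)) (js, js)
  = 4 * sumH N G Lam js.
Proof.
  unfold pair_op at 1; cbn [fst snd].
  rewrite (ThetaOp_ext N G _ (W1 G Lam js)) by
    (auto; intros a b Hab Hb; apply (pair_correction (a, b)); split; cbn; lia).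
  rewrite ThetaOp_diag, (symm_le _ js js (le_n js)), W1_diag.
  rewrite (sumN_ext N _ (fun n => if Nat.eqb n js then 0 else G js n * symm (W1 G Lam js) js n))
    by (intros n _; destruct (Nat.eqb n js); ring).
  rewrite sumH_row. ring.
Qed.

Lemma vec_unit_column j : vec_op N G (unit_star nat Nat.eq_dec js) j = G j js.
Proof.
  unfold vec_op, unit_star.
  rewrite (sumN_ext N _ (fun l => if Nat.eqb l js then G j l else 0)).
  - apply sumN_delta; auto.
  - intros l _. destruct (Nat.eq_dec l js) as [->|ne].
    + rewrite Nat.eqb_refl. ring.
    + rewrite (proj2 (Nat.eqb_neq l js) ne). ring.
Qed.

Lemma vec_unit_value : vec_op N G (unit_star nat Nat.eq_dec js) js = - sumG N G js.
Proof. rewrite vec_unit_column, HGdiag, sumG_row. reflexivity. Qed.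

Lemma vec_correction_value :
  vec_op N G (correction nat Nat.eq_dec (vec_op N G) Lam js) js = sumH N G Lam js.
Proof.
  unfold vec_op at 1, sumH. apply sumN_ext. intros l Hl. unfold correction.
  rewrite vec_unit_column. destruct (Nat.eq_dec l js) as [->|ne].
  - rewrite Nat.eqb_refl. ring.
  - rewrite (proj2 (Nat.eqb_neq l js) ne), (HGsym js l) by auto.
    assert (h := Hgap l Hl ne). field. lra.
Qed.

Theorem pair_top_eigenpair theta nu : 0 < theta -> theta * Bconst N G <= g / 4 ->
  is_largest (is_eigT N (opT N G Lam theta)) nu ->
  Rabs (nu - (- 2 * Lam js - 2 * theta * sumG N G js + 4 * theta ^ 2 * sumH N G Lam js))
    <= a3 g (Bconst N G) * theta ^ 3 /\
  forall W, is_eigvecT N (opT N G Lam theta) nu W ->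
    W js js <> 0 /\ forall a b, (a <= b)%nat -> (b < N)%nat -> ~ (a = js /\ b = js) ->
      Rabs (/ W js js * W a b) <= a1 g (Bconst N G) * theta /\
      Rabs (/ W js js * W a b - theta * W1 G Lam js a b) <= a2 g (Bconst N G) * theta ^ 2.
Proof.
  intros Ht HtB Hl.
  destruct (largest_eigenpair_expansion _ pair_eq_dec (pair_dom N) (pair_op N G)
    (pair_diag Lam) (js, js) g (Bconst N G) ltac:(split; cbn; lia) Hg Bconst_pos
    pair_diag_gap (pair_op_ext N G) (fun x y c p _ => pair_op_lin N G x y c p) pair_bound
    (pair_dominant N ltac:(lia)) (N * N) (pair_enc N) (pair_dec N) (pair_matrix N G)
    (pair_enc_ok N) (fun k _ _ => pair_dec_ok N ltac:(lia) k) (pair_rows N G)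
    pair_rows_outside theta nu Ht HtB (is_largest_iff _ _ nu (pair_is_eig_iff N G Lam theta) Hl))
    as [hnu hvec].
  split.
  - rewrite pair_unit_value, pair_correction_value in hnu.
    unfold pair_diag in hnu; cbn [fst snd] in hnu.
    replace (- 2 * Lam js - 2 * theta * sumG N G js + 4 * theta ^ 2 * sumH N G Lam js)
      with (- (Lam js + Lam js) + theta * (- 2 * sumG N G js) + theta ^ 2 * (4 * sumH N G Lam js))
      by ring.
    exact hnu.
  - intros W HW. destruct (proj1 (pair_eigvec_iff N G Lam theta nu W) HW) as [Hnz Heig].
    destruct (hvec _ Hnz Heig) as [hW hoff]. split; [exact hW|].
    intros a b Hab Hb Hne.
    assert (Hp : pair_dom N (a, b)) by (split; cbn; lia).
    assert (hc := pair_correction (a, b) Hp). cbn [fst snd] in hc. rewrite <- hc.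
    apply (hoff (a, b) Hp). intros e. injection e. tauto.
Qed.


Theorem vec_top_eigenvalue theta nu : 0 < theta -> theta * Bconst N G <= g / 4 ->
  is_largest (is_eigN N G Lam theta) nu ->
  Rabs (nu - (- Lam js - theta * sumG N G js + theta ^ 2 * sumH N G Lam js))
    <= a3 g (Bconst N G) * theta ^ 3.
Proof.
  intros Ht HtB Hl.
  assert (h := largest_eigenvalue_expansion _ Nat.eq_dec (vec_dom N) (vec_op N G) Lam js g
    (Bconst N G) Hjs Hg Bconst_pos Hgap (vec_op_ext N G) (fun x y c j _ => vec_op_lin N G x y c j) vec_bound
    (fun x => vec_dominant N x ltac:(lia)) N (fun j => j) (fun k => k) G
    (fun i Hi => conj Hi eq_refl) (fun k _ _ => eq_refl) (fun k v _ _ => eq_refl)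
    (fun k Hk Hout => False_ind _ (Hout Hk)) theta nu Ht HtB Hl).
  rewrite vec_unit_value, vec_correction_value in h.
  replace (- Lam js - theta * sumG N G js + theta ^ 2 * sumH N G Lam js)
    with (- Lam js + theta * - sumG N G js + theta ^ 2 * sumH N G Lam js) by ring.
  exact h.
Qed.

(* Undoing a rescaling by [w = 1 + O(theta^2)] preserves an [O(theta^2)] estimate. *)
Lemma rescaled_entry_bound w z v theta A C b : 0 < w <= 1 -> 0 <= theta <= 1 ->
  0 <= A -> 0 <= C -> 1 - w <= C * theta ^ 2 ->
  Rabs (/ w * z - theta * v) <= A * theta ^ 2 -> Rabs v <= b ->
  Rabs (z - theta * v) <= (A + C * (1 + b)) * theta ^ 2.
Proof.
  intros Hw Ht HA HC H1 Hz Hv. assert (ht2 : 0 <= theta ^ 2) by apply pow2_ge_0.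
  assert (hb : 0 <= b) by (eapply Rle_trans; [apply Rabs_pos|exact Hv]).
  replace (z - theta * v) with (w * (/ w * z - theta * v) + (w - 1) * (theta * v))
    by (field; lra).
  eapply Rle_trans; [apply Rabs_triang|].
  rewrite !Rabs_mult, (Rabs_right w), (Rabs_right theta), (Rabs_left1 (w - 1)) by lra.
  assert (e1 : w * Rabs (/ w * z - theta * v) <= A * theta ^ 2).
  { apply Rle_trans with (1 * Rabs (/ w * z - theta * v)); [|lra].
    apply Rmult_le_compat_r; [apply Rabs_pos|lra]. }
  assert (e2 : theta * Rabs v <= b) by (assert (h := Rabs_pos v); nra).
  assert (e3 : - (w - 1) * (theta * Rabs v) <= C * theta ^ 2 * b).
  { apply Rmult_le_compat; [lra|assert (h := Rabs_pos v); nra|lra|exact e2]. }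
  nra.
Qed.

Definition eigvec_const (N : nat) (G : nat -> nat -> R) (g : R) : R :=
  INR N * (a2 g (Bconst N G)
           + INR N * INR N * a1 g (Bconst N G) ^ 2 * (1 + Bconst N G / g)).

Theorem pair_top_eigenvector theta nu W : 0 < theta -> theta <= 1 ->
  theta * Bconst N G <= g / 4 -> is_largest (is_eigT N (opT N G Lam theta)) nu ->
  is_eigvecT N (opT N G Lam theta) nu W -> normT N W = 1 -> 0 < W js js ->
  normT N (fun j l => W j l - W0 js j l - theta * W1 G Lam js j l)
    <= eigvec_const N G g * theta ^ 2.
Proof.
  intros Ht Ht1 HtB Hl HW Hn Hw.
  set (B := Bconst N G) in *. set (w := W js js) in *.
  assert (HB := Bconst_pos). fold B in HB.
  assert (hA1 := a1_nonneg g B Hg HB). assert (hA2 := a2_nonneg g B Hg HB).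
  assert (hBg : 0 <= B / g) by (apply Rle_mult_inv_pos; lra).
  assert (hN := pos_INR N). assert (hC0 : 0 <= INR N * INR N * a1 g B ^ 2) by
    (apply Rmult_le_pos; [nra|apply pow2_ge_0]).
  destruct (proj2 (pair_top_eigenpair theta nu Ht HtB Hl) W HW) as [_ Hoff]. fold w in Hoff.
  assert (Hsmall : forall a b, (a <= b)%nat -> (b < N)%nat -> ~ (a = js /\ b = js) ->
      Rabs (W a b) <= w * (a1 g B * theta)).
  { intros a b Hab Hb Hne. destruct (Hoff a b Hab Hb Hne) as [h1 _].
    rewrite Rabs_mult, Rabs_inv, (Rabs_right w) in h1 by lra.
    apply Rmult_le_reg_l with (/ w); [apply Rinv_0_lt_compat; lra|].
    rewrite <- Rmult_assoc, Rinv_l, Rmult_1_l by lra. exact h1. }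
  (* hence [w] is [1] up to [theta^2] *)
  destruct (unit_vector_star_entry N W js (a1 g B * theta) Hjs Hn Hw Hsmall) as [hw1 hw2].
  fold w in hw1, hw2.
  replace (INR N * INR N * (a1 g B * theta) ^ 2) with (INR N * INR N * a1 g B ^ 2 * theta ^ 2)
    in hw2 by ring.
  unfold eigvec_const. fold B. rewrite Rmult_assoc. apply normT_bound; [nra|].
  intros a b Hab Hb. destruct (classic (a = js /\ b = js)) as [[-> ->]|hne].
  - unfold W0. rewrite Nat.eqb_refl, W1_diag. cbn [andb]. fold w.
    rewrite Rabs_left1 by lra. assert (0 <= theta ^ 2) by apply pow2_ge_0. nra.
  - assert (hW0 : W0 js a b = 0).
    { unfold W0. destruct (Nat.eqb_spec a js), (Nat.eqb_spec b js); cbn [andb]; tauto. }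
    rewrite hW0, Rminus_0_r.
    assert (hc := pair_correction (a, b) ltac:(split; cbn; lia)). cbn [fst snd] in hc.
    apply (rescaled_entry_bound w); auto; [lra|apply (proj2 (Hoff a b Hab Hb hne))|].
    rewrite <- hc. apply (correction_bound _ pair_eq_dec (pair_dom N) (pair_op N G)
      (pair_diag Lam) (js, js) g B Hg HB pair_diag_gap pair_bound (a, b)).
    split; cbn; lia.
Qed.


Corollary decay_rates theta mu lam : 0 < theta -> theta * Bconst N G <= g / 4 ->
  is_largest (is_eigT N (opT N G Lam theta)) (- mu) ->
  is_largest (is_eigN N G Lam theta) (- lam) ->
  Rabs (mu - (2 * Lam js + 2 * theta * sumG N G js - 4 * theta ^ 2 * sumH N G Lam js))
    <= a3 g (Bconst N G) * theta ^ 3 /\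
  Rabs (mu - 2 * lam - (- 2 * theta ^ 2 * sumH N G Lam js))
    <= 3 * a3 g (Bconst N G) * theta ^ 3.
Proof.
  intros Ht HtB Hmu Hlam.
  assert (hT := proj1 (pair_top_eigenpair theta (- mu) Ht HtB Hmu)).
  assert (hN := vec_top_eigenvalue theta (- lam) Ht HtB Hlam).
  rewrite <- Rabs_Ropp in hT, hN.
  replace (- (- mu - (- 2 * Lam js - 2 * theta * sumG N G js + 4 * theta ^ 2 * sumH N G Lam js)))
    with (mu - (2 * Lam js + 2 * theta * sumG N G js - 4 * theta ^ 2 * sumH N G Lam js))
    in hT by ring.
  split; [exact hT|].
  replace (mu - 2 * lam - (- 2 * theta ^ 2 * sumH N G Lam js))
    with ((mu - (2 * Lam js + 2 * theta * sumG N G js - 4 * theta ^ 2 * sumH N G Lam js))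
          - 2 * (- (- lam - (- Lam js - theta * sumG N G js + theta ^ 2 * sumH N G Lam js))))
    by ring.
  unfold Rminus at 1. eapply Rle_trans; [apply Rabs_triang|].
  rewrite Rabs_Ropp, Rabs_mult, (Rabs_right 2) by lra. lra.
Qed.

End Spectrum.

Lemma gap_exists N (Lam : nat -> R) js :
  (forall j, (j < N)%nat -> j <> js -> Lam js < Lam j) ->
  exists g, 0 < g /\ forall j, (j < N)%nat -> j <> js -> Lam js + g <= Lam j.
Proof.
  intros H. induction N as [|n IH].
  - exists 1. split; [lra|]. intros; lia.
  - destruct (IH (fun j hj => H j ltac:(lia))) as [g [Hg Hj]].
    destruct (Nat.eq_dec n js) as [->|ne].
    + exists g. split; [auto|]. intros j Hj1 Hj2. apply Hj; lia.
    + assert (hn := H n ltac:(lia) ne).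
      exists (Rmin g (Lam n - Lam js)). split; [apply Rmin_pos; lra|].
      intros j Hj1 Hj2. assert (h1 := Rmin_l g (Lam n - Lam js)).
      assert (h2 := Rmin_r g (Lam n - Lam js)).
      destruct (Nat.eq_dec j n) as [->|jn]; [lra|]. assert (h := Hj j ltac:(lia) Hj2). lra.
Qed.

Lemma reach_neighbour N G js l : reach N G js l ->
  l = js \/ exists m, (m < N)%nat /\ m <> js /\ 0 < G js m.
Proof.
  induction 1 as [|m l Hr IH Hm Hl Hne Hpos]; [left; reflexivity|right].
  destruct IH as [->|IH]; [exists l; auto|exact IH].
Qed.

Lemma sumH_pos N (Lam : nat -> R) G js : (2 <= N)%nat -> (js < N)%nat ->
  (forall j, (j < N)%nat -> j <> js -> Lam js < Lam j) ->
  (forall j l, (j < N)%nat -> (l < N)%nat -> G j l = G l j) ->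
  irreducible N G -> 0 < sumH N G Lam js.
Proof.
  intros HN Hjs Hmin HGsym Hirr.
  set (l0 := if Nat.eqb js 0 then 1%nat else 0%nat).
  assert (hl0 : (l0 < N)%nat /\ l0 <> js) by (unfold l0; destruct (Nat.eqb_spec js 0); lia).
  destruct (reach_neighbour N G js l0 (Hirr js l0 Hjs (proj1 hl0))) as [e|[m [Hm [Hne Hp]]]];
    [destruct hl0; contradiction|].
  assert (hnn : forall j, (j < N)%nat ->
      0 <= (if Nat.eqb j js then 0 else G j js ^ 2 / (Lam j - Lam js))).
  { intros j Hj. destruct (Nat.eqb_spec j js) as [|ne]; [lra|].
    assert (h := Hmin j Hj ne). apply Rle_mult_inv_pos; [apply pow2_ge_0|lra]. }
  eapply Rlt_le_trans; [|apply (sumN_ge_term N _ m hnn Hm)].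
  destruct (Nat.eqb_spec m js); [contradiction|]. assert (h := Hmin m Hm Hne).
  rewrite (HGsym m js) by auto. apply Rdiv_lt_0_compat; [apply pow_lt|]; lra.
Qed.

Lemma small_theta B g : 0 < B -> 0 < g ->
  exists delta, 0 < delta /\ forall theta, 0 < theta < delta -> theta <= 1 /\ theta * B <= g / 4.
Proof.
  intros HB Hg. exists (Rmin 1 (g / (4 * B))). split.
  - apply Rmin_pos; [lra|apply Rdiv_lt_0_compat; lra].
  - intros theta [h1 h2]. assert (e1 := Rmin_l 1 (g / (4 * B))).
    assert (e2 := Rmin_r 1 (g / (4 * B))). split; [lra|].
    assert (h : theta * (4 * B) <= g / (4 * B) * (4 * B)) by (apply Rmult_le_compat_r; lra).
    replace (g / (4 * B) * (4 * B)) with g in h by (field; lra). lra.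
Qed.

Lemma eventually_negative (f : R -> R) c K delta0 : 0 < c -> 0 <= K -> 0 < delta0 ->
  (forall theta, 0 < theta < delta0 -> Rabs (f theta - (- c * theta ^ 2)) <= K * theta ^ 3) ->
  exists delta, 0 < delta /\ forall theta, 0 < theta < delta -> f theta < 0.
Proof.
  intros Hc HK Hd H. exists (Rmin delta0 (c / (K + 1))). split.
  - apply Rmin_pos; [lra|apply Rdiv_lt_0_compat; lra].
  - intros theta [h1 h2]. assert (e1 := Rmin_l delta0 (c / (K + 1))).
    assert (e2 := Rmin_r delta0 (c / (K + 1))).
    assert (h := abs_le_inv _ _ (H theta ltac:(lra))).
    assert (hq : theta * (K + 1) < c).
    { assert (hlt : theta * (K + 1) < c / (K + 1) * (K + 1)) by (apply Rmult_lt_compat_r; lra).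
      replace (c / (K + 1) * (K + 1)) with c in hlt by (field; lra). exact hlt. }
    assert (ht2 : 0 < theta ^ 2) by (apply pow_lt; lra).
    assert (K * theta ^ 3 < c * theta ^ 2).
    { replace (K * theta ^ 3) with (theta ^ 2 * (theta * K)) by ring.
      rewrite (Rmult_comm c). apply Rmult_lt_compat_l; nra. }
    lra.
Qed.

Theorem mainTheorem10 (N : nat) (HN : (2 <= N)%nat)
  (Lam : nat -> R) (G : nat -> nat -> R) (js : nat)
  (HLam : forall j, (j < N)%nat -> 0 <= Lam j)
  (Hjs : (js < N)%nat)
  (Hmin : forall j, (j < N)%nat -> j <> js -> Lam js < Lam j)
  (HG : gamma_ok N G) (Hirr : irreducible N G)
  (mu lam : R -> R)
  (Hmu : forall theta, 0 < theta ->
           is_largest (is_eigT N (opT N G Lam theta)) (- mu theta))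
  (Hlam : forall theta, 0 < theta ->
           is_largest (is_eigN N G Lam theta) (- lam theta)) :
  (exists C delta, 0 < delta /\ forall theta, 0 < theta < delta ->
     Rabs (mu theta - (2 * Lam js + 2 * theta * sumG N G js
                       - 4 * theta ^ 2 * sumH N G Lam js)) <= C * theta ^ 3)
  /\
  (exists C delta, 0 < delta /\ forall theta, 0 < theta < delta ->
     forall W, is_eigvecT N (opT N G Lam theta) (- mu theta) W ->
       normT N W = 1 -> 0 < W js js ->
       normT N (fun j l => W j l - W0 js j l - theta * W1 G Lam js j l)
         <= C * theta ^ 2)
  /\
  (exists C delta, 0 < delta /\ forall theta, 0 < theta < delta ->
     Rabs (mu theta - 2 * lam theta - (- 2 * theta ^ 2 * sumH N G Lam js))
       <= C * theta ^ 3)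
  /\
  (exists delta, 0 < delta /\ forall theta, 0 < theta < delta ->
     mu theta - 2 * lam theta < 0).
Proof.
  destruct HG as [HGsym [_ HGdiag]].
  destruct (gap_exists N Lam js Hmin) as [g [Hg Hgap]].
  assert (HB := Bconst_pos N G js Hjs).
  set (K := a3 g (Bconst N G)).
  assert (HK : 0 <= K) by (apply Rmult_le_pos; [lra|apply a2_nonneg; lra]).
  destruct (small_theta _ _ HB Hg) as [delta [Hdelta Hsmall]].
  assert (Hrates : forall theta, 0 < theta < delta ->
    Rabs (mu theta - (2 * Lam js + 2 * theta * sumG N G js - 4 * theta ^ 2 * sumH N G Lam js))
      <= K * theta ^ 3 /\
    Rabs (mu theta - 2 * lam theta - (- 2 * theta ^ 2 * sumH N G Lam js)) <= 3 * K * theta ^ 3).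
  { intros theta Ht. apply (decay_rates N Lam G js g Hjs Hg Hgap HGsym (HGdiag js Hjs));
      [lra|apply Hsmall|apply Hmu|apply Hlam]; tauto. }
  split; [|split; [|split]].
  - exists K, delta. split; [auto|]. apply Hrates.
  - exists (eigvec_const N G g), delta. split; [auto|]. intros theta Ht W HW Hn Hw.
    destruct (Hsmall theta Ht). apply (pair_top_eigenvector N Lam G js g Hjs Hg Hgap HGsym
      theta (- mu theta)); auto; [lra|apply Hmu; lra].
  - exists (3 * K), delta. split; [auto|]. apply Hrates.
  - apply (eventually_negative (fun theta => mu theta - 2 * lam theta)
      (2 * sumH N G Lam js) (3 * K) delta); [|lra|auto|].
    + assert (h := sumH_pos N Lam G js HN Hjs Hmin HGsym Hirr). lra.
    + intros theta Ht. replace (- (2 * sumH N G Lam js) * theta ^ 2)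
        with (- 2 * theta ^ 2 * sumH N G Lam js) by ring. apply Hrates, Ht.
Qed.
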